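(* Let $\gamma\in(0,1)$, $t\ge1$, $H\ge1$ integers, and for each integer $i$ with $t/2\le i<t$ let $\bm Q_i\in\mathbb R^{|\mathcal S||\mathcal A|}$ satisfy $\bm0\le\bm Q_i\le\frac1{1-\gamma}\bm1$, with $\bm V_i(s)=\max_a\bm Q_i(s,a)$ and greedy policy $\pi_i(s)\in\arg\max_a\bm Q_i(s,a)$. Let $\Pi$ be the set of deterministic policies $\pi$ such that for every $s\in\mathcal S$, $\pi(s)\in\{\pi_i(s):t/2\le i<t\}$ (the index $i$ may depend on $s$). Then for any policies $\widehat\pi_1,\dots,\widehat\pi_{H}\in\Pi$, $$\sum_{h=0}^{H-1}\gamma^h\Big(\prod_{k=1}^h\bm P^{\widehat\pi_k}\Big)\max_{t/2\le i<t}\mathsf{Var}_{\bm P}(\bm V_i)\le\frac{4}{\gamma^2(1-\gamma)^2}\Big(1+2\max_{t/2\le i<t}\|\bm Q_i-\bm Q^\star\|_\infty\Big)\bm1.$$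
   Context: Discounted MDP with finite $\mathcal S,\mathcal A$, rewards in $[0,1]$, discount $\gamma$, optimal Q-function $\bm Q^\star$. Vector inequalities and $\max$ over vectors are entrywise; $\bm1$ is the all-ones vector. $\bm P\in\mathbb R^{|\mathcal S||\mathcal A|\times|\mathcal S|}$ with $\bm P((s,a),s')=P(s'\mid s,a)$. For a deterministic policy $\pi$, $\bm\Pi^\pi(s,(s,a))=1$ iff $a=\pi(s)$ and $0$ otherwise, and $\bm P^\pi=\bm P\bm\Pi^\pi$. For $\bm V\in\mathbb R^{|\mathcal S|}$, $\mathsf{Var}_{\bm P}(\bm V)=\bm P(\bm V\circ\bm V)-(\bm P\bm V)\circ(\bm P\bm V)$, $\circ$ the entrywise product. Empty products are the identity. *)

From mathcomp Require Import all_boot all_order all_algebra.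
Set Implicit Arguments. Unset Strict Implicit. Unset Printing Implicit Defensive.
Import Order.TTheory GRing.Theory Num.Theory.
Local Open Scope ring_scope.

Section MDP.
Variables (R : realFieldType) (S A : finType).

(* A transition kernel P((s,a), s') = P(s' | s,a). *)
Definition is_transition (P : S * A -> S -> R) : Prop :=
  (forall sa s', 0 <= P sa s') /\ (forall sa, \sum_(s' : S) P sa s' = 1).

(* V(s) = max_a Q(s,a)  (a0 : A only serves as a seed for the finite max). *)
Definition Vmax (a0 : A) (Q : S * A -> R) (s : S) : R :=
  \big[Num.max/Q (s, a0)]_(a : A) Q (s, a).

Definition PV (P : S * A -> S -> R) (V : S -> R) : S * A -> R :=
  fun sa => \sum_(s' : S) P sa s' * V s'.

(* P^pi = P Pi^pi acting on vectors over S x A: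
   (P^pi x)(s,a) = sum_s' P(s'|s,a) x(s', pi s'). *)
Definition Ppi (P : S * A -> S -> R) (pi : S -> A) (x : S * A -> R) : S * A -> R :=
  fun sa => \sum_(s' : S) P sa s' * x (s', pi s').

(* (prod_{k=1}^h P^{pis k}) x = P^{pis 1} ( ... (P^{pis h} x)); empty product = id *)
Fixpoint prodPpi (P : S * A -> S -> R) (pis : nat -> S -> A) (h : nat)
  (x : S * A -> R) : S * A -> R :=
  match h with
  | O => x
  | h'.+1 => prodPpi P pis h' (Ppi P (pis h'.+1) x)
  end.

Definition VarP (P : S * A -> S -> R) (V : S -> R) : S * A -> R :=
  fun sa => PV P (fun s => V s * V s) sa - PV P V sa * PV P V sa.

(* Q* is the optimal Q-function: the (unique, since 0 <= gamma < 1) fixed point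
   of the Bellman optimality operator  Q |-> r + gamma P (max_a Q). *)
Definition is_optimal_Q (P : S * A -> S -> R) (r : S * A -> R) (gamma : R)
  (a0 : A) (Qstar : S * A -> R) : Prop :=
  forall sa, Qstar sa = r sa + gamma * PV P (Vmax a0 Qstar) sa.

Definition supnorm (x : S * A -> R) : R := \big[Num.max/0]_(sa : S * A) `|x sa|.

End MDP.

From mathcomp Require Import all_boot all_order all_algebra ring lra.
Import Order.TTheory GRing.Theory Num.Theory.
Local Open Scope ring_scope.

(* Write  M = 1 / (1 - gamma),  V* = max_a Q*,  eps = max_i ||Q_i - Q*||,  and
   x = max_i Var_P(V_i).  The proof has three layers.
   1. Real-number facts: a discounted telescoping estimate and the final
      rescaling of the constants.
   2. Kernel facts: [PV P] and the products [prodPpi] of the [P^pi] are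
      monotone affine operators, and the variance [VarP] is nonnegative,
      bounded by M^2 and Lipschitz in the value function.
   3. Bellman facts: 0 <= Q* <= M; a greedy action of Q_i is 2 eps-optimal for
      Q*; hence, along every policy of the mixture,
         gamma^2 x <= gamma^2 P (V*^2) - V*^2 + 2 M (1 + 3 eps)
      (the second moment of V* drops along a Bellman step).
   Pushing this one-step inequality through the products of the P^pi makes
   the discounted sum telescope, which bounds gamma^2 * sum by
   2 M^2 + 2 M^2 (1 + 3 eps) <= 4 M^2 (1 + 2 eps). *)

Section RealInequalities.
Context {R : realFieldType}.

Lemma geometric_sum_le (g : R) n : 0 <= g < 1 -> \sum_(h < n) g ^+ h <= 1 / (1 - g).
Proof.
move=> /andP[g0 g1]; have g1' : 0 < 1 - g by rewrite subr_gt0.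
have gn : 0 <= g ^+ n by exact: exprn_ge0.
have gs : (\sum_(h < n) g ^+ h) * (1 - g) = 1 - g ^+ n by have := subrX1 g n; lra.
by rewrite ler_pdivlMr // gs; lra.
Qed.

(* If [g^2 G_(m+1) <= g^2 E_(m+1) - E_m + C] for
   every [m < n], with [E >= 0], then the discounted sum of the [G_h] is bounded
   by the initial term, the last [E_n] and the accumulated slack; the cross
   terms [(g^(m+2) - g^(m+1)) E_m] are nonpositive because [g <= 1]. *)
Lemma discounted_telescoping (g B C : R) (G E : nat -> R) n :
  0 <= g <= 1 -> 0 <= C -> (forall m, 0 <= E m) -> g ^+ 2 * G 0%N <= B ->
  (forall m, (m < n)%N -> g ^+ 2 * G m.+1 <= g ^+ 2 * E m.+1 - E m + C) ->
  g ^+ 2 * \sum_(h < n.+1) g ^+ h * G h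
  <= B + g ^+ n.+2 * E n + C * \sum_(h < n.+1) g ^+ h.
Proof.
move=> /andP[g0 g1] C0 E0 G0; elim: n => [_|n IH step].
  rewrite !big_ord1 expr0 mul1r mulr1; have := E0 0%N.
  by have := exprn_ge0 2 g0; nra.
have {}IH := IH (fun m lt_mn => step m (ltnW lt_mn)).
have {}step := step n (ltnSn n).
rewrite big_ord_recr [X in _ <= _ + _ * X]big_ord_recr /=.
have gn : 0 <= g * g ^+ n by rewrite -exprS exprn_ge0.
have := ler_wpM2l gn step.
rewrite !exprS expr0 mulr1 in IH *.
move: IH; set sG := \sum_(i < n.+1) _; set sg := \sum_(i < n.+1) _.
set k := g * g ^+ n; have kE : 0 <= k * E n by rewrite mulr_ge0.
have : g * (k * E n) <= k * E n by nra.
nra.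
Qed.

Lemma sq_le_shift (v w u b M : R) :
  0 <= v <= M -> 0 <= w -> 0 <= u <= b -> v <= w + u -> v * v <= w * w + 2 * M * b.
Proof.
move=> /andP[v0 vM] w0 /andP[u0 ub] vwu; have [vu|uv] := lerP v u.
  have : v * v <= M * b by nra.
  nra.
have : (v - u) * (v - u) <= w * w by apply: ler_pM; lra.
nra.
Qed.

Lemma horizon_rescaling (g M eps sum : R) :
  0 < g < 1 -> M = 1 / (1 - g) -> 0 <= eps ->
  g ^+ 2 * sum <= 2 * (M * M) + 2 * M * (1 + 3 * eps) / (1 - g) ->
  sum <= 4 / (g ^+ 2 * (1 - g) ^+ 2) * (1 + 2 * eps).
Proof.
move=> /andP[g0 g1] M_def eps0 bound.
have g1' : 1 - g != 0 by rewrite subr_eq0 eq_sym lt_eqF.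
have CM : 2 * M * (1 + 3 * eps) / (1 - g) = 2 * (M * M) * (1 + 3 * eps).
  by rewrite M_def; field.
have scale : 4 / (g ^+ 2 * (1 - g) ^+ 2) = 4 * (M * M) / g ^+ 2.
  by rewrite M_def; field; rewrite gt_eqF.
rewrite scale mulrAC ler_pdivlMr ?exprn_gt0 // mulrC; rewrite CM in bound.
have MM : 0 <= M * M by rewrite -expr2 sqr_ge0.
by have := mulr_ge0 eps0 MM; nra.
Qed.

End RealInequalities.

Section Kernel.
Context {R : realFieldType} {S A : finType} {P : S * A -> S -> R}.
Hypothesis P_ge0 : forall sa s', 0 <= P sa s'.
Hypothesis P_sum1 : forall sa, \sum_(s' : S) P sa s' = 1.

(* The expectation [PV P] is affine, since the rows of [P] sum to one, and
   monotone, since its entries are nonnegative. *)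
Lemma PV_affine (a b c : R) (x y : S -> R) sa :
  PV P (fun s => a * x s + b * y s + c) sa = a * PV P x sa + b * PV P y sa + c.
Proof.
rewrite /PV; under eq_bigr do rewrite !mulrDr mulrCA [P _ _ * (b * _)]mulrCA.
by rewrite !big_split /= -!mulr_sumr -mulr_suml P_sum1 mul1r.
Qed.

Lemma PV_cst (c : R) sa : PV P (fun=> c) sa = c.
Proof. by rewrite /PV -mulr_suml P_sum1 mul1r. Qed.

Lemma PV_le (x y : S -> R) sa : (forall s, x s <= y s) -> PV P x sa <= PV P y sa.
Proof. by move=> xy; apply: ler_sum => s _; apply: ler_wpM2l. Qed.

Lemma PV_bounds {lo hi : R} {x : S -> R} sa :
  (forall s, lo <= x s <= hi) -> lo <= PV P x sa <= hi.
Proof.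
move=> xB; apply/andP; split; [rewrite -(PV_cst lo sa) | rewrite -(PV_cst hi sa)];
  by apply: PV_le => s; case/andP: (xB s).
Qed.

Lemma Ppi_PV pi (x : S * A -> R) sa : Ppi P pi x sa = PV P (fun s => x (s, pi s)) sa.
Proof. by []. Qed.

Lemma prodPpi_ext pis h (x y : S * A -> R) sa : (forall z, x z = y z) ->
  prodPpi P pis h x sa = prodPpi P pis h y sa.
Proof.
elim: h x y sa => [|h IH] x y sa xy /=; first exact: xy.
by apply: IH => z; apply: eq_bigr => s _; rewrite xy.
Qed.

Lemma prodPpi_le pis h (x y : S * A -> R) sa : (forall z, x z <= y z) ->
  prodPpi P pis h x sa <= prodPpi P pis h y sa.
Proof.
elim: h x y sa => [|h IH] x y sa xy /=; first exact: xy.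
by apply: IH => z; apply: PV_le => s.
Qed.

Lemma prodPpi_affine pis h (a b c : R) (x y : S * A -> R) sa :
  prodPpi P pis h (fun z => a * x z + b * y z + c) sa
  = a * prodPpi P pis h x sa + b * prodPpi P pis h y sa + c.
Proof.
elim: h x y sa => [|h IH] x y sa //=; rewrite -IH.
by apply: prodPpi_ext => z; exact: PV_affine.
Qed.

Lemma prodPpi_bounds pis h {lo hi : R} {x : S * A -> R} sa :
  (forall z, lo <= x z <= hi) -> lo <= prodPpi P pis h x sa <= hi.
Proof.
move=> xB; have cst c : prodPpi P pis h (fun=> c) sa = c.
  transitivity (prodPpi P pis h (fun z => 0 * x z + 0 * x z + c) sa).
    by apply: prodPpi_ext => z; rewrite !mul0r !add0r.
  by rewrite prodPpi_affine !mul0r !add0r.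
apply/andP; split; [rewrite -(cst lo) | rewrite -(cst hi)];
  by apply: prodPpi_le => z; case/andP: (xB z).
Qed.

Lemma VarP_centre (V : S -> R) (c : R) sa :
  PV P (fun s => (V s - c) ^+ 2) sa = VarP P V sa + (PV P V sa - c) ^+ 2.
Proof.
have -> : PV P (fun s => (V s - c) ^+ 2) sa =
          PV P (fun s => 1 * (V s * V s) + (-2 * c) * V s + c ^+ 2) sa.
  by apply: eq_bigr => s _; congr (_ * _); ring.
by rewrite PV_affine /VarP; ring.
Qed.

Lemma VarP_ge0 (V : S -> R) sa : 0 <= VarP P V sa.
Proof.
have := VarP_centre V (PV P V sa) sa; rewrite subrr expr0n /= addr0 => <-.
by apply: sumr_ge0 => s _; rewrite mulr_ge0 ?sqr_ge0.
Qed.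

Lemma VarP_le_sq (V : S -> R) (M : R) sa :
  (forall s, 0 <= V s <= M) -> VarP P V sa <= M * M.
Proof.
move=> VB; have VV s : 0 <= V s * V s <= M * M.
  by case/andP: (VB s) => ??; apply/andP; split; nra.
have /andP[_ PVV] := PV_bounds sa VV.
by rewrite /VarP; have := sqr_ge0 (PV P V sa); rewrite expr2; lra.
Qed.

(* On value functions with range in [0, M], moving each value by at most [eps]
   changes the variance by at most [2 eps M]: compare both variances with the
   second moments about the common centre [P W]. *)
Lemma VarP_perturb (V W : S -> R) (M eps : R) sa :
  (forall s, 0 <= V s <= M) -> (forall s, 0 <= W s <= M) ->
  (forall s, `|V s - W s| <= eps) ->
  VarP P V sa <= VarP P W sa + 2 * eps * M.
Proof.
move=> VB WB VW; set c := PV P W sa.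
have /andP[c0 cM] : 0 <= c <= M by exact: PV_bounds.
have dev : PV P (fun s => (V s - c) ^+ 2) sa
           <= PV P (fun s => 1 * (W s - c) ^+ 2 + 0 * 0 + 2 * eps * M) sa.
  apply: PV_le => s; have := VW s; rewrite ler_norml => /andP[??].
  case/andP: (VB s) => ??; case/andP: (WB s) => ??; nra.
rewrite PV_affine VarP_centre (VarP_centre W c) subrr expr0n /= in dev.
by have := sqr_ge0 (PV P V sa - c); lra.
Qed.

Lemma VarP_bellman_step {V : S -> R} {M g rho eps : R} {s sa} :
  (forall s', 0 <= V s' <= M) -> 0 <= g -> 0 <= rho <= 1 -> 0 <= eps ->
  V s <= rho + g * PV P V sa + 2 * eps ->
  g ^+ 2 * VarP P V sa
  <= g ^+ 2 * PV P (fun s' => V s' * V s') sa - V s * V s + 2 * M * (1 + 2 * eps).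
Proof.
move=> VB g0 /andP[rho0 rho1] eps0 gap.
have /andP[m0 _] : 0 <= PV P V sa <= M by exact: PV_bounds.
have := @sq_le_shift _ (V s) (g * PV P V sa) (rho + 2 * eps) (1 + 2 * eps) M (VB s)
  (mulr_ge0 g0 m0).
rewrite /VarP !expr2; lra.
Qed.

(* Suppose that along each policy
   [pis k], [k = 1 .. H], the one-step inequality [g^2 x <= g^2 P f - f + C]
   holds.  Pushed through the first [m] operators [P^pi], it becomes a
   telescoping relation between the products [prodPpi] applied to [x] and to
   [P f]; hence the discounted sum is at most [2 B + C / (1 - g)]. *)
Lemma discounted_prodPpi_sum pis (x : S * A -> R) (f : S -> R) (g B C : R) H sa :
  0 <= g < 1 -> 0 <= C -> (0 < H)%N ->
  (forall s, 0 <= f s <= B) -> (forall z, 0 <= x z <= B) ->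
  (forall k, (1 <= k <= H)%N -> forall s,
     g ^+ 2 * x (s, pis k s) <= g ^+ 2 * PV P f (s, pis k s) - f s + C) ->
  g ^+ 2 * \sum_(h < H) g ^+ h * prodPpi P pis h x sa <= 2 * B + C / (1 - g).
Proof.
move=> g01 C0 H0 fB xB step; have /andP[g0 g1] := g01.
have g0_le1 : 0 <= g <= 1 by rewrite g0 ltW.
have g2 : 0 <= g ^+ 2 <= 1 by rewrite exprn_ge0 // exprn_ile1 // ltW.
set E := fun n => prodPpi P pis n (PV P f) sa.
have EB n : 0 <= E n <= B by apply: prodPpi_bounds => z; exact: PV_bounds.
have telescope m : (m < H.-1)%N ->
    g ^+ 2 * prodPpi P pis m.+1 x sa <= g ^+ 2 * E m.+1 - E m + C.
  move=> lt_mH; set pi := pis m.+1.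
  have -> : g ^+ 2 * prodPpi P pis m.+1 x sa
          = prodPpi P pis m (fun z => g ^+ 2 * Ppi P pi x z + 0 * Ppi P pi x z + 0) sa.
    by rewrite prodPpi_affine /=; ring.
  have -> : g ^+ 2 * E m.+1 - E m + C
          = prodPpi P pis m (fun z => g ^+ 2 * Ppi P pi (PV P f) z + -1 * PV P f z + C) sa.
    by rewrite prodPpi_affine /E /=; ring.
  apply: prodPpi_le => z.
  rewrite !Ppi_PV -!PV_affine; apply: PV_le => s; rewrite mul0r !addr0.
  have hk : (0 < m.+1 <= H)%N by rewrite /= ltnW // -ltn_predRL.
  by have := step m.+1 hk s; lra.
have x0B : g ^+ 2 * prodPpi P pis 0 x sa <= B.
  by case/andP: (xB sa) => ??; case/andP: g2 => ??; rewrite /=; nra.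
have := discounted_telescoping g B C (fun h => prodPpi P pis h x sa) E H.-1 g0_le1 C0
  (fun m => proj1 (andP (EB m))) x0B telescope.
rewrite prednK //.
have last_term : g ^+ H.+1 * E H.-1 <= B.
  by case/andP: (EB H.-1) => ??; have := exprn_ile1 H.+1 g0 (ltW g1); nra.
have geom : C * \sum_(h < H) g ^+ h <= C * (1 / (1 - g)).
  by rewrite ler_wpM2l // geometric_sum_le.
by rewrite mul1r in geom; lra.
Qed.

End Kernel.

Section GreedyValues.
Context {R : realFieldType} {S A : finType} {a0 : A}.

Lemma Vmax_ge (Q : S * A -> R) s a : Q (s, a) <= Vmax a0 Q s.
Proof. exact: le_bigmax. Qed.

Lemma Vmax_le (Q : S * A -> R) s (b : R) :
  (forall a, Q (s, a) <= b) -> Vmax a0 Q s <= b.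
Proof. by move=> Qb; apply: bigmax_le. Qed.

Lemma Vmax_bounds {Q : S * A -> R} {M : R} :
  (forall z, 0 <= Q z <= M) -> forall s, 0 <= Vmax a0 Q s <= M.
Proof.
move=> QB s; apply/andP; split; last by apply: Vmax_le => a; case/andP: (QB (s, a)).
by apply: le_trans (Vmax_ge Q s a0); case/andP: (QB (s, a0)).
Qed.

Lemma Vmax_dist {Q1 Q2 : S * A -> R} {eps : R} :
  (forall z, `|Q1 z - Q2 z| <= eps) -> forall s, `|Vmax a0 Q1 s - Vmax a0 Q2 s| <= eps.
Proof.
move=> Q12 s; rewrite ler_norml; apply/andP; split.
  suff : Vmax a0 Q2 s <= Vmax a0 Q1 s + eps by lra.
  apply: Vmax_le => a; have := Q12 (s, a); rewrite ler_norml => /andP[? _].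
  by have := Vmax_ge Q1 s a; lra.
suff : Vmax a0 Q1 s <= Vmax a0 Q2 s + eps by lra.
apply: Vmax_le => a; have := Q12 (s, a); rewrite ler_norml => /andP[_ ?].
by have := Vmax_ge Q2 s a; lra.
Qed.

Lemma supnorm_le_bigmax {I : finType} {J : pred I} (F : I -> S * A -> R) i z :
  J i -> `|F i z| <= \big[Num.max/0]_(j | J j) supnorm (F j).
Proof.
move=> Ji; apply: le_trans (le_bigmax _ (fun z' => `|F i z'|) z) _.
exact: (le_bigmax_cond _ (fun j => supnorm (F j)) Ji).
Qed.

Section Bellman.
Context {P : S * A -> S -> R} {r : S * A -> R} {gamma : R} {Qstar : S * A -> R}.
Hypothesis P_ge0 : forall sa s', 0 <= P sa s'.
Hypothesis P_sum1 : forall sa, \sum_(s' : S) P sa s' = 1.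
Hypothesis r_bounds : forall sa, 0 <= r sa <= 1.
Hypothesis gamma_ge0 : 0 <= gamma.
Hypothesis Qstar_fix : is_optimal_Q P r gamma a0 Qstar.

(* With rewards in [0, 1], the optimal Q-function takes values in
   [0, 1 / (1 - gamma)]: its extreme values satisfy  min >= gamma * min  and
   max <= 1 + gamma * max. *)
Lemma optimal_Q_bounds : gamma < 1 -> forall z, 0 <= Qstar z <= 1 / (1 - gamma).
Proof.
move=> g1 z; have g1' : 0 < 1 - gamma by rewrite subr_gt0.
set mx := \big[Num.max/Qstar z]_(z' : S * A) Qstar z'.
set mn := \big[Num.min/Qstar z]_(z' : S * A) Qstar z'.
have le_mx z' : Qstar z' <= mx by exact: le_bigmax.
have mn_le z' : mn <= Qstar z' by exact: bigmin_le.
have PV_Vmax_bounds z' : mn <= PV P (Vmax a0 Qstar) z' <= mx.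
  apply: (PV_bounds P_ge0 P_sum1) => s; apply/andP; split.
    exact: le_trans (mn_le (s, a0)) (Vmax_ge _ s a0).
  by apply: Vmax_le => a.
have mx_rec : mx <= 1 + gamma * mx.
  suff hz z' : Qstar z' <= 1 + gamma * mx by apply: bigmax_le.
  rewrite Qstar_fix; case/andP: (r_bounds z') => _ ?; case/andP: (PV_Vmax_bounds z') => _ ?.
  by apply: lerD => //; apply: ler_wpM2l.
have mn_rec : gamma * mn <= mn.
  suff hz z' : gamma * mn <= Qstar z' by apply: le_bigmin.
  rewrite Qstar_fix; case/andP: (r_bounds z') => ? _; case/andP: (PV_Vmax_bounds z') => ? _.
  by rewrite -[X in X <= _]add0r; apply: lerD => //; apply: ler_wpM2l.
have mx_le : mx <= 1 / (1 - gamma) by rewrite ler_pdivlMr //; lra.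
by apply/andP; split; [apply: le_trans (mn_le z); nra | apply: le_trans mx_le].
Qed.

Lemma greedy_bellman_gap {Q : S * A -> R} {eps : R} {s b} :
  (forall z, `|Q z - Qstar z| <= eps) -> (forall a, Q (s, a) <= Q (s, b)) ->
  Vmax a0 Qstar s <= r (s, b) + gamma * PV P (Vmax a0 Qstar) (s, b) + 2 * eps.
Proof.
move=> QQs greedy; rewrite -Qstar_fix.
have := Vmax_dist QQs s; rewrite distrC ler_norml => /andP[_ ?].
have := QQs (s, b); rewrite ler_norml => /andP[_ ?].
have : Vmax a0 Q s <= Q (s, b) by exact: Vmax_le.
lra.
Qed.

Lemma max_VarP_bounds {I : finType} {J : pred I} {Qs : I -> S * A -> R} {M : R} z :
  0 <= M -> (forall i, J i -> forall z', 0 <= Qs i z' <= M) ->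
  0 <= \big[Num.max/0]_(i | J i) VarP P (Vmax a0 (Qs i)) z <= M * M.
Proof.
move=> M0 QsB; rewrite bigmax_ge_id /=; apply: bigmax_le => [|i Ji]; first exact: mulr_ge0.
exact: (VarP_le_sq P_ge0 P_sum1) (Vmax_bounds (QsB i Ji)).
Qed.

Lemma max_VarP_perturb {I : finType} {J : pred I} {Qs : I -> S * A -> R} {M eps : R} z :
  0 <= eps -> (forall z', 0 <= Qstar z' <= M) ->
  (forall i, J i -> forall z', 0 <= Qs i z' <= M) ->
  (forall i, J i -> forall z', `|Qs i z' - Qstar z'| <= eps) ->
  \big[Num.max/0]_(i | J i) VarP P (Vmax a0 (Qs i)) z
  <= VarP P (Vmax a0 Qstar) z + 2 * eps * M.
Proof.
move=> eps0 QstarB QsB QsQstar; have M0 : 0 <= M by case/andP: (QstarB z) => *; lra.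
apply: bigmax_le => [|i Ji].
  by have := VarP_ge0 P_ge0 P_sum1 (Vmax a0 Qstar) z; have := mulr_ge0 eps0 M0; lra.
apply: (VarP_perturb P_ge0 P_sum1) (Vmax_bounds (QsB i Ji)) (Vmax_bounds QstarB) _.
exact: Vmax_dist (QsQstar i Ji).
Qed.

Lemma greedy_variance_step {Q : S * A -> R} {M eps v : R} {s b} :
  gamma <= 1 -> 0 <= eps -> (forall z, 0 <= Qstar z <= M) ->
  (forall z, `|Q z - Qstar z| <= eps) -> (forall a, Q (s, a) <= Q (s, b)) ->
  v <= VarP P (Vmax a0 Qstar) (s, b) + 2 * eps * M ->
  gamma ^+ 2 * v
  <= gamma ^+ 2 * PV P (fun s' => Vmax a0 Qstar s' * Vmax a0 Qstar s') (s, b)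
     - Vmax a0 Qstar s * Vmax a0 Qstar s + 2 * M * (1 + 3 * eps).
Proof.
move=> g1 eps0 QstarB QQs greedy v_le.
have M0 : 0 <= M by case/andP: (QstarB (s, b)) => *; lra.
have := VarP_bellman_step P_ge0 P_sum1 (Vmax_bounds QstarB) gamma_ge0 (r_bounds _) eps0
  (greedy_bellman_gap QQs greedy).
have /andP[g2_ge0 g2_le1] : 0 <= gamma ^+ 2 <= 1 by rewrite exprn_ge0 ?exprn_ile1.
have := ler_wpM2l g2_ge0 v_le.
have : gamma ^+ 2 * (eps * M) <= eps * M by have := mulr_ge0 eps0 M0; nra.
lra.
Qed.

End Bellman.
End GreedyValues.

Theorem mainTheorem10 (R : realFieldType) (S A : finType) (a0 : A)
  (P : S * A -> S -> R) (r : S * A -> R) (gamma : R) (Qstar : S * A -> R)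
  (t H : nat) (Q : nat -> S * A -> R) (pi : nat -> S -> A)
  (hatpi : nat -> S -> A) :
  is_transition P ->
  (forall sa, 0 <= r sa <= 1) ->
  0 < gamma < 1 ->
  is_optimal_Q P r gamma a0 Qstar ->
  (1 <= t)%N -> (1 <= H)%N ->
  (forall i, (t <= 2 * i)%N -> (i < t)%N ->
     forall sa, 0 <= Q i sa <= 1 / (1 - gamma)) ->
  (forall i, (t <= 2 * i)%N -> (i < t)%N ->
     forall s a, Q i (s, a) <= Q i (s, pi i s)) ->
  (forall k, (1 <= k <= H)%N ->
     forall s, exists i, [/\ (t <= 2 * i)%N, (i < t)%N & hatpi k s = pi i s]) ->
  forall sa : S * A,
    \sum_(h < H) gamma ^+ h *
       prodPpi P hatpi h
         (fun sa' => \big[Num.max/0]_(i < t | (t <= 2 * i)%N)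
                        VarP P (Vmax a0 (Q i)) sa') sa
    <= 4 / (gamma ^+ 2 * (1 - gamma) ^+ 2) *
       (1 + 2 * \big[Num.max/0]_(i < t | (t <= 2 * i)%N)
                    supnorm (fun sa' => Q i sa' - Qstar sa')).
Proof.
move=> [P_ge0 P_sum1] r_bounds g01 Qstar_fix _ H_gt0 Q_bounds Q_greedy hatpi_mix sa.
have /andP[g0 g1] := g01; have g_ge0_lt1 : 0 <= gamma < 1 by rewrite (ltW g0) g1.
set M := 1 / (1 - gamma).
set eps := \big[Num.max/0]_(i < t | _) _.
set Vstar := Vmax a0 Qstar.
have M_gt0 : 0 < M by rewrite divr_gt0 // subr_gt0.
have eps_ge0 : 0 <= eps by exact: bigmax_ge_id.
have Qstar_B := optimal_Q_bounds P_ge0 P_sum1 r_bounds (ltW g0) Qstar_fix g1.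
have Q_B (i : 'I_t) : (t <= 2 * i)%N -> forall z, 0 <= Q i z <= M.
  by move=> ti; exact: Q_bounds ti (ltn_ord i).
have Q_eps i : (t <= 2 * i)%N -> (i < t)%N -> forall z, `|Q i z - Qstar z| <= eps.
  move=> ti lt_it z.
  exact: (supnorm_le_bigmax (fun j : 'I_t => fun z => Q j z - Qstar z) (Ordinal lt_it) z ti).
pose x z := \big[Num.max/0]_(i < t | (t <= 2 * i)%N) VarP P (Vmax a0 (Q i)) z.
have x_B z : 0 <= x z <= M * M := max_VarP_bounds P_ge0 P_sum1 z (ltW M_gt0) Q_B.
have x_Var z : x z <= VarP P Vstar z + 2 * eps * M :=
  max_VarP_perturb P_ge0 P_sum1 z eps_ge0 Qstar_B Q_B (fun i ti => Q_eps i ti (ltn_ord i)).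
have step k : (1 <= k <= H)%N -> forall s, gamma ^+ 2 * x (s, hatpi k s)
    <= gamma ^+ 2 * PV P (fun s' => Vstar s' * Vstar s') (s, hatpi k s)
       - Vstar s * Vstar s + 2 * M * (1 + 3 * eps).
  move=> hk s; have [i [ti lt_it ->]] := hatpi_mix k hk s.
  exact (greedy_variance_step P_ge0 P_sum1 r_bounds (ltW g0) Qstar_fix (ltW g1) eps_ge0
    Qstar_B (Q_eps i ti lt_it) (Q_greedy i ti lt_it s) (x_Var _)).
have C_ge0 : 0 <= 2 * M * (1 + 3 * eps) by have := mulr_ge0 (ltW M_gt0) eps_ge0; lra.
have Vstar2_B s : 0 <= Vstar s * Vstar s <= M * M.
  have /andP[? ?] : 0 <= Vstar s <= M := Vmax_bounds Qstar_B s.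
  by apply/andP; split; nra.
apply: (horizon_rescaling gamma M eps _ g01 (erefl _) eps_ge0).
exact: discounted_prodPpi_sum P_ge0 P_sum1 hatpi x _ gamma (M * M) _ H sa
  g_ge0_lt1 C_ge0 H_gt0 Vstar2_B x_B step.
Qed.
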